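(* Let $w_0,w_1$ be words of length $N$. If $w_0\to w_1$ is a perfect star anagram with path $p$ and constant step size $S$ (i.e. $p$ is a perfect star path with $s_n=S$ for all $n$), then $w_1\to w_0$ is a perfect star anagram with the reversed path $\bar p$, whose steps are all equal to a constant $\bar S$ satisfying $\bar S S \bmod N = 1$.
   Context: A path of length $N$ is a vector $p=(p_0,\dots,p_{N-1})$ whose entries are the integers $0,\dots,N-1$ in some order; indices are cyclic, $p_N=p_0$. For an integer $x$, $x\bmod N$ is its remainder in $\{0,\dots,N-1\}$. If $w_0=a_0\cdots a_{N-1}$, then $p$ is a path for the anagram $w_0\to w_1$ if $w_1=a_{p_0}\cdots a_{p_{N-1}}$. The path differences are $d_n=p_{n+1}-p_n$, and the steps are $s_n=d_n$ if $|d_n|<N/2$; $s_n=N/2$ if $|d_n|=N/2$; $s_n=d_n-N$ if $d_n>N/2$; $s_n=d_n+N$ if $d_n<-N/2$. A star path is a path with $|s_n|\neq 1$ for all $n$; a perfect star path is a star path all of whose edge lengths $|s_n|$ are equal (equivalently all $s_n$ equal a common constant). The anagram is a perfect star anagram with path $p$ if $p$ is a path for it that is a perfect star path. The reversed path $\bar p$ is the inverse permutation of $p$: $\bar p_{p_n}=n$ and $p_{\bar p_n}=n$ for all $n$; it is a path for $w_1\to w_0$, and its steps $\bar s_n$ are defined from $\bar p$ in the same way. *)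

From HB Require Import structures.
From mathcomp Require Import all_boot all_order all_algebra all_fingroup.
Set Implicit Arguments. Unset Strict Implicit. Unset Printing Implicit Defensive.
Import Order.TTheory GRing.Theory Num.Theory.
Local Open Scope ring_scope.

Definition path_for (A : Type) (N : nat) (w0 w1 : 'I_N -> A) (p : {perm 'I_N}) :=
  forall n : 'I_N, w1 n = w0 (p n).

(* path difference d_n = p_{n+1} - p_n (indices cyclic: ordS n = (n+1) mod N) *)
Definition pdiff (N : nat) (p : {perm 'I_N}) (n : 'I_N) : int :=
  (nat_of_ord (p (ordS n)))%:Z - (nat_of_ord (p n))%:Z.

Definition step (N : nat) (p : {perm 'I_N}) (n : 'I_N) : int :=
  let d := pdiff p n in
  if (2 * `|d| < N)%N then d
  else if (2 * `|d| == N)%N then (N %/ 2)%:Z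
  else if 0 < d then d - N%:Z
  else d + N%:Z.

Definition star_path (N : nat) (p : {perm 'I_N}) :=
  forall n : 'I_N, `|step p n| != 1.

Definition perfect_star_path (N : nat) (p : {perm 'I_N}) :=
  star_path p /\ forall n m : 'I_N, `|step p n| = `|step p m|.

Definition perfect_star_anagram (A : Type) (N : nat) (w0 w1 : 'I_N -> A)
  (p : {perm 'I_N}) :=
  path_for w0 w1 p /\ perfect_star_path p.

From HB Require Import structures.
From mathcomp Require Import all_boot all_order all_algebra all_fingroup.
From mathcomp Require Import zify ring.
Set Implicit Arguments. Unset Strict Implicit. Unset Printing Implicit Defensive.
Import Order.TTheory GRing.Theory Num.Theory.
Local Open Scope ring_scope.

(* If every step of p equals S then, since a step is congruent to its path
   difference modulo N, p_j - p_i = (j - i) S (mod N).  At the indices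
   pbar_m and pbar_{m+1} this reads (pbar_{m+1} - pbar_m) S = 1 (mod N): every
   difference of pbar is an inverse of S modulo N, so all of them are
   congruent.  A step is the unique representative of its residue in
   (-N/2, N/2], hence all steps of pbar equal one Sbar, and Sbar S = 1 (mod N).
   Finally Sbar = +-1 would give S = Sbar^2 S = Sbar (mod N), hence S = Sbar,
   contradicting that p is a star path. *)

Definition centered (N : nat) (x : int) : bool := (- N%:Z < x *+ 2 <= N%:Z).

Lemma centered_eq_mod (N : nat) (a b : int) :
  centered N a -> centered N b -> (a = b %[mod N])%Z -> a = b.
Proof.
move=> /andP[a_gt a_le] /andP[b_gt b_le] /eqP; rewrite eqz_mod_dvd => /dvdzP[k abk].
have k0 : k = 0 by nia.
by apply/eqP; rewrite -subr_eq0 abk k0 mul0r.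
Qed.

Lemma eqz_mod_inv (N a b c : int) :
  (a * c = 1 %[mod N])%Z -> (b * c = 1 %[mod N])%Z -> (a = b %[mod N])%Z.
Proof.
move=> ac1 bc1.
by rewrite -[a]mulr1 -modzMmr -bc1 modzMmr mulrCA -modzMmr ac1 modzMmr mulr1.
Qed.

Lemma centered_inv_unit (N : nat) (a b : int) : centered N a -> centered N b ->
  (a * b = 1 %[mod N])%Z -> `|a| = 1 -> b = a.
Proof.
move=> ca cb ab1 a1; apply: centered_eq_mod cb ca _.
apply: (eqz_mod_inv (c := a)); first by rewrite mulrC.
by rewrite (_ : a * a = 1) //; lia.
Qed.

Lemma path_for_inv (A : Type) (N : nat) (w0 w1 : 'I_N -> A) (p : {perm 'I_N}) :
  path_for w0 w1 p -> path_for w1 w0 p^-1.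
Proof. by move=> p_w n; rewrite p_w permKV. Qed.

Section ConstantStep.

Variables (N : nat) (p : {perm 'I_N}).

Lemma pdiff_lt n : (`|pdiff p n| < N)%N.
Proof. rewrite /pdiff; have := ltn_ord (p (ordS n)); have := ltn_ord (p n); lia. Qed.

Lemma step_mod n : (step p n = pdiff p n %[mod N])%Z.
Proof.
have := pdiff_lt n; rewrite /step; move: (pdiff p n) => d d_lt.
case: ifP => // _; case: ifP => [/eqP d2|_].
  have -> : (N %/ 2 = `|d|)%N by rewrite -d2 mulKn.
  apply/eqP; rewrite eqz_mod_dvd; apply/dvdzP.
  by have [d_gt0|d_le0] := boolP (0 < d); [exists 0 | exists 1]; lia.
case: ifP => _; last by rewrite modzDr.
by rewrite -[d in RHS](subrK N%:Z) modzDr.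
Qed.

Lemma step_centered n : centered N (step p n).
Proof.
have := pdiff_lt n; rewrite /centered /step mulr2n; move: (pdiff p n) => d d_lt.
case: ifP => [|d_ge]; first lia.
case: ifP => [/eqP d2|d_neq]; first by rewrite -d2 mulKn //; lia.
case: ifP; lia.
Qed.

Variables (S : int) (pS : forall n, step p n = S).

Lemma const_step_mod0 (o : 'I_N) : o = 0 :> nat ->
  forall j : 'I_N, ((p j)%:Z - (p o)%:Z = (j : nat)%:Z * S %[mod N])%Z.
Proof.
move=> o0 [k]; elim: k => [|k IHk] k_lt.
  rewrite mul0r (_ : Ordinal k_lt = o) ?subrr //; exact: val_inj.
have k_lt' : (k < N)%N := ltnW k_lt.
have -> : Ordinal k_lt = ordS (Ordinal k_lt') by apply: val_inj; rewrite /= modn_small.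
have := step_mod (Ordinal k_lt'); rewrite pS /pdiff => stepk.
rewrite -[_ - _](subrKA (p (Ordinal k_lt'))%:Z) -modzDm (IHk k_lt') -stepk modzDm /=.
by rewrite modn_small // intS mulrDl mul1r.
Qed.

Lemma const_step_mod (i j : 'I_N) :
  ((p j)%:Z - (p i)%:Z = ((j : nat)%:Z - (i : nat)%:Z) * S %[mod N])%Z.
Proof.
pose o := Ordinal (leq_ltn_trans (leq0n i) (ltn_ord i)).
have /eqP := const_step_mod0 (o := o) erefl j; have /eqP := const_step_mod0 (o := o) erefl i.
rewrite !eqz_mod_dvd => oi oj; apply/eqP; rewrite eqz_mod_dvd.
have -> : (p j)%:Z - (p i)%:Z - ((j : nat)%:Z - (i : nat)%:Z) * S =
          ((p j)%:Z - (p o)%:Z - (j : nat)%:Z * S) - ((p i)%:Z - (p o)%:Z - (i : nat)%:Z * S).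
  by ring.
exact: rpredB.
Qed.

Lemma ordS_mod (m : 'I_N) : ((ordS m : nat)%:Z = (m : nat)%:Z + 1 %[mod N])%Z.
Proof. by rewrite /= -modz_nat modz_mod -addn1 PoszD. Qed.

Lemma pdiff_inv_mul_step m : (pdiff p^-1 m * S = 1 %[mod N])%Z.
Proof.
have := const_step_mod ((p^-1)%g m) ((p^-1)%g (ordS m)); rewrite !permKV => <-.
by rewrite -modzDml ordS_mod modzDml addrAC subrr add0r.
Qed.

Lemma const_step_perfect_star : `|S| != 1 -> perfect_star_path p.
Proof. by move=> S_neq1; split=> [n|n m]; rewrite !pS. Qed.

End ConstantStep.

Theorem mainTheorem10 (A : Type) (N : nat) (w0 w1 : 'I_N -> A)
  (p : {perm 'I_N}) (S : int) :
  (1 < N)%N ->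
  perfect_star_anagram w0 w1 p ->
  (forall n : 'I_N, step p n = S) ->
  perfect_star_anagram w1 w0 p^-1 /\
  exists Sbar : int,
    (forall n : 'I_N, step p^-1 n = Sbar) /\ ((Sbar * S) %% N%:Z)%Z = 1.
Proof.
move=> N_gt1 [p_w0w1 [p_star _]] pS.
pose o := Ordinal (ltnW N_gt1).
pose Sbar := step p^-1 o.
have SbarS : (Sbar * S = 1 %[mod N])%Z.
  by rewrite -modzMml step_mod modzMml pdiff_inv_mul_step.
have qSbar n : step p^-1 n = Sbar.
  apply: centered_eq_mod (step_centered _ _) (step_centered _ _) _.
  rewrite !step_mod.
  exact: eqz_mod_inv (pdiff_inv_mul_step pS n) (pdiff_inv_mul_step pS o).
have Sbar_neq1 : `|Sbar| != 1.
  apply: contra (p_star o) => /eqP Sbar1; rewrite pS.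
  have := step_centered p o; rewrite pS => S_centered.
  by rewrite (centered_inv_unit (step_centered _ _) S_centered SbarS Sbar1) Sbar1.
split; first by split; [exact: path_for_inv | exact: const_step_perfect_star qSbar _].
by exists Sbar; split; rewrite // SbarS modz_small //; lia.
Qed.
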